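(* Let $X$ be a normed space with unit sphere $S_X$ and closed unit ball $B_X$, and kernel $k(x,y)=\|x-y\|$. Then $q(S_X,S_X)=q(S_X,B_X)$ and $\overline{M}(S_X,S_X)=\overline{M}(S_X,B_X)$.
   Context: For $H,L\subset X$: $U^\mu(x)=\int\|x-y\|\,d\mu(y)$; $q(H,L):=\inf_{\mu\in\mathfrak{M}_1(H)}\sup_{x\in L}U^\mu(x)$, where $\mathfrak{M}_1(H)$ is the set of regular Borel probability measures on $X$ (norm topology) concentrated on $H$; $\overline{M}_n(H,L):=\inf_{w_1,\dots,w_n\in H}\sup_{x\in L}\frac1n\sum_{j=1}^n\|x-w_j\|$ and $\overline{M}(H,L):=\lim_{n\to\infty}\overline{M}_n(H,L)=\inf_n\overline{M}_n(H,L)$. *)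

From HB Require Import structures.
From mathcomp Require Import all_boot all_order all_algebra.
From mathcomp Require Import all_classical all_reals all_analysis.
Set Implicit Arguments. Unset Strict Implicit. Unset Printing Implicit Defensive.
Import Order.TTheory GRing.Theory Num.Theory.
Import numFieldNormedType.Exports.
Local Open Scope classical_set_scope.
Local Open Scope ring_scope.

Section Defs.
Variables (R : realType) (X : normedModType R).

Definition borel_space : Type := g_sigma_algebraType (@open X).
Definition borel_display := sigma_display (@open X).

Definition unit_sphere : set X := [set x | `|x| = 1].
Definition unit_ball : set X := [set x | `|x| <= 1].

Definition regular_measure (mu : probability borel_space R) : Prop :=
  forall A : set borel_space, measurable A ->
    mu A = ereal_sup [set mu K | K in [set K : set borel_space |
                         @compact X K /\ K `<=` A]] /\
    mu A = ereal_inf [set mu U | U in [set U : set borel_space |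
                         @open X U /\ A `<=` U]].

Definition M1 (H : set X) : set (probability borel_space R) :=
  [set mu | regular_measure mu /\ mu (H : set borel_space) = 1%E].

Definition potential (mu : probability borel_space R) (x : X) : \bar R :=
  (\int[mu]_y (`|x - (y : X)|)%:E)%E.

Definition sup_potential (L : set X) (mu : probability borel_space R) : \bar R :=
  ereal_sup [set potential mu x | x in L].

Definition q (H L : set X) : \bar R :=
  ereal_inf [set sup_potential L mu | mu in M1 H].

Definition sup_mean (n : nat) (L : set X) (w : 'I_n -> X) : \bar R :=
  ereal_sup [set ((n%:R)^-1 * \sum_(j < n) `|x - w j|)%:E | x in L].

Definition Mbar_n (n : nat) (H L : set X) : \bar R :=
  ereal_inf [set sup_mean L w | w in [set w : 'I_n -> X | forall j, H (w j)]].

(* \overline{M}(H,L) = lim_n M_n = inf_{n>=1} M_n *)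
Definition Mbar (H L : set X) : \bar R :=
  ereal_inf [set Mbar_n n.+1 H L | n in [set: nat]].
End Defs.

From HB Require Import structures.
From mathcomp Require Import all_boot all_order all_algebra.
From mathcomp Require Import all_classical all_reals all_analysis.
From mathcomp Require Import measurable_realfun ring lra.
Set Implicit Arguments. Unset Strict Implicit. Unset Printing Implicit Defensive.
Import Order.TTheory GRing.Theory Num.Theory.
Import numFieldNormedType.Exports.
Local Open Scope classical_set_scope.
Local Open Scope ring_scope.

(* A convex function is bounded on the closed unit ball by its supremum on the
   unit sphere, since every [x] with [|x| <= 1] is the convex combination
   ((1 + |x|)/2) v + ((1 - |x|)/2) (-v) of two antipodal unit vectors.  Both
   the potential [x |-> int |x - y| dmu(y)] and the mean distance
   [x |-> (1/n) sum_j |x - w_j|] are convex by the triangle inequality, so the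
   inner suprema defining [q] and [Mbar_n] coincide over [S_X] and [B_X]; the
   sphere is nonempty as it carries a probability measure, resp. contains [w_1]. *)

(* The library's [convex_function] is real-valued; potentials may be [+oo]. *)
Definition convex_efun (R : numDomainType) (X : lmodType R) (F : X -> \bar R) :=
  forall (a b : X) (l : R), 0 <= l <= 1 ->
    (F (l *: a + (1 - l) *: b)%R <= l%:E * F a + (1 - l)%:E * F b)%E.

Lemma lee_convex_comb (R : realDomainType) (e1 e2 s : \bar R) (l : R) :
  0 <= l <= 1 -> (e1 <= s)%E -> (e2 <= s)%E ->
  (l%:E * e1 + (1 - l)%:E * e2 <= s)%E.
Proof.
move=> /andP[l0 l1] e1s e2s.
have l1' : 0 <= 1 - l by rewrite subr_ge0.
apply: le_trans (leeD (lee_wpmul2l _ e1s) (lee_wpmul2l _ e2s)) _; rewrite ?lee_fin //.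
by rewrite -ge0_muleDl ?lee_fin // -EFinD addrC subrK mul1e.
Qed.

Lemma convex_combB (R : pzRingType) (X : lmodType R) (a b y : X) (l : R) :
  l *: a + (1 - l) *: b - y = l *: (a - y) + (1 - l) *: (b - y).
Proof.
by rewrite !scalerBr addrACA -opprD -scalerDl subrKC scale1r.
Qed.

Lemma ler_norm_convex_combB (R : numDomainType) (X : normedModType R) (a b y : X) (l : R) :
  0 <= l <= 1 ->
  `|l *: a + (1 - l) *: b - y| <= l * `|a - y| + (1 - l) * `|b - y|.
Proof.
move=> /andP[l0 l1]; have l1' : 0 <= 1 - l by rewrite subr_ge0.
rewrite convex_combB (le_trans (ler_normD _ _)) //.
by rewrite !normrZ !ger0_norm.
Qed.

Section UnitBall.
Variables (R : realType) (X : normedModType R).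

Lemma unit_sphere_sub_ball : @unit_sphere R X `<=` @unit_ball R X.
Proof. by move=> x; rewrite /unit_sphere /unit_ball /= => ->. Qed.

Lemma unit_sphere_polar (x : X) : @unit_sphere R X !=set0 ->
  exists2 v, @unit_sphere R X v & x = `|x| *: v.
Proof.
move=> [u u1]; have [->|x0] := eqVneq x 0; first by exists u; rewrite ?normr0 ?scale0r.
exists (`|x|^-1 *: x); last by rewrite scalerA mulfV ?scale1r ?normr_eq0.
by rewrite /unit_sphere /= normrZ normfV normr_id mulVf ?normr_eq0.
Qed.

Lemma unit_ball_convex_comb_sphere (x : X) :
  @unit_sphere R X !=set0 -> @unit_ball R X x ->
  exists v l, [/\ @unit_sphere R X v, 0 <= l <= 1 & x = l *: v + (1 - l) *: - v].
Proof.
move=> /(unit_sphere_polar x)[v v1 xv] x1; rewrite /unit_ball /= in x1.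
exists v, ((1 + `|x|) / 2); split => //.
  by have := normr_ge0 x => ?; apply/andP; split; lra.
by rewrite scalerN -scalerBl {1}xv; congr (_ *: _); field.
Qed.

Lemma ereal_sup_unit_ball (F : X -> \bar R) :
  @unit_sphere R X !=set0 -> convex_efun F ->
  ereal_sup (F @` @unit_ball R X) = ereal_sup (F @` @unit_sphere R X).
Proof.
move=> S0 Fconv; apply/le_anti/andP; split; last first.
  exact/ereal_sup_le/image_subset/unit_sphere_sub_ball.
apply: ge_ereal_sup => _ [x /(unit_ball_convex_comb_sphere S0)[v [l [v1 l01 ->]]] <-].
apply: le_trans (Fconv _ _ _ l01) _.
by apply: lee_convex_comb => //; apply: ereal_sup_ubound;
  [exists v | exists (- v); rewrite // /unit_sphere /= normrN].
Qed.

End UnitBall.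

Lemma continuous_borel_measurable (R : realType) (T : ptopologicalType) (g : T -> R) :
  continuous g ->
  measurable_fun setT (fun y : g_sigma_algebraType (@open T) => (g y)%:E).
Proof.
move=> g_cont; apply/measurable_EFinP.
apply: (measurability _ (RGenOpens.measurableE R)) => _ [_ [u [v ->] <-]].
apply: sub_sigma_algebra; rewrite setTI.
exact: (continuousP _).1 g_cont _ (@interval_open _ (BRight u) (BLeft v) _ _).
Qed.

Section Potential.
Variables (R : realType) (X : normedModType R).

Lemma measurable_dist (c : X) :
  measurable_fun setT (fun y : borel_space X => (`|c - y|)%:E).
Proof.
apply: continuous_borel_measurable => y.
by apply: cvg_norm; apply: cvgB; [exact: cvg_cst | exact: cvg_id].
Qed.

Lemma potential_convex (mu : probability (borel_space X) R) :
  convex_efun (potential mu).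
Proof.
move=> a b l l01; have /andP[l0 l1] := l01.
have l1' : 0 <= 1 - l by rewrite subr_ge0.
have mZ (c : X) (k : R) :
    measurable_fun setT (fun y : borel_space X => k%:E * (`|c - y|)%:E)%E.
  by apply: measurable_funeM; exact: measurable_dist.
have -> : (l%:E * potential mu a + (1 - l)%:E * potential mu b =
    \int[mu]_y (l%:E * (`|a - y|)%:E + (1 - l)%:E * (`|b - y|)%:E))%E.
  rewrite ge0_integralD //; last 2 first.
  - by move=> y _; rewrite mule_ge0 ?lee_fin.
  - by move=> y _; rewrite mule_ge0 ?lee_fin.
  by rewrite !ge0_integralZl ?lee_fin //; exact: measurable_dist.
apply: ge0_le_integral => //; [exact: measurable_dist | exact: emeasurable_funD |].
by move=> y _; rewrite -!EFinM -EFinD lee_fin ler_norm_convex_combB.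
Qed.

End Potential.

Lemma mean_dist_convex (R : numFieldType) (X : normedModType R) n (w : 'I_n -> X) :
  convex_efun (fun x : X => ((n%:R)^-1 * \sum_(j < n) `|x - w j|)%:E).
Proof.
move=> a b l l01; rewrite -!EFinM -EFinD lee_fin.
apply: le_trans (ler_wpM2l _ (ler_sum _ (fun j _ => ler_norm_convex_combB _ _ (w j) l01))) _.
  by rewrite invr_ge0.
by rewrite big_split /= -!mulr_sumr mulrDr !(mulrCA n%:R^-1).
Qed.

Lemma M1_nonempty (R : realType) (X : normedModType R) (H : set X)
    (mu : probability (borel_space X) R) :
  M1 H mu -> H !=set0.
Proof.
move=> [_ muH1]; apply/set0P/eqP => H0.
by move: muH1; rewrite H0 measure0 => /eqP; rewrite eq_sym onee_eq0.
Qed.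

Theorem corollary3p8 (R : realType) (X : normedModType R) :
  q (@unit_sphere R X) (@unit_sphere R X) = q (@unit_sphere R X) (@unit_ball R X) /\
  Mbar (@unit_sphere R X) (@unit_sphere R X) = Mbar (@unit_sphere R X) (@unit_ball R X).
Proof.
split.
  rewrite /q; congr ereal_inf; apply: eq_imagel => mu /M1_nonempty S0.
  by rewrite /sup_potential ereal_sup_unit_ball //; exact: potential_convex.
rewrite /Mbar; congr ereal_inf; apply: eq_imagel => n _.
rewrite /Mbar_n; congr ereal_inf; apply: eq_imagel => w w1.
rewrite /sup_mean ereal_sup_unit_ball //; first by exists (w ord0).
exact: mean_dist_convex.
Qed.
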